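(* Let $\mathbf X\in\mathbb R^{n\times p}$ be a fixed matrix with $p<n$, let $\mathbf P$ be the orthogonal projection onto its column space, and let $\mathbf X_{\mathrm{all}}\in\mathbb R^{n\times p_{\mathrm{all}}}$ be a fixed matrix. Suppose $\mathbf y=\mathbf X\boldsymbol\beta+\sigma\boldsymbol\varepsilon$ with $\boldsymbol\beta\in\mathbb R^p$, $\sigma>0$ and $\boldsymbol\varepsilon\sim\mathcal N_n(\mathbf 0,\mathbf I)$ (the null hypothesis). Let $\hat{\mathbf R}^{(0)}=(\mathbf I-\mathbf P)\mathbf y/\|(\mathbf I-\mathbf P)\mathbf y\|_2$, and for $b=1,\dots,B$ let $\hat{\mathbf R}^{(b)}=(\mathbf I-\mathbf P)\boldsymbol\zeta^{(b)}/\|(\mathbf I-\mathbf P)\boldsymbol\zeta^{(b)}\|_2$, where $\boldsymbol\zeta^{(1)},\dots,\boldsymbol\zeta^{(B)}$ are i.i.d. $\mathcal N_n(\mathbf 0,\mathbf I)$, independent of $\boldsymbol\varepsilon$. Let $f_1,\dots,f_L:\mathbb R^n\times\mathbb R^{n\times p_{\mathrm{all}}}\to\mathbb R$ be measurable functions, set $f^{(b)}_l=f_l(\hat{\mathbf R}^{(b)},\mathbf X_{\mathrm{all}})$, $\mathbf f^{(b)}=(f^{(b)}_l)_{l=1}^L$, and let $\mathbf f^{(-b)}$ denote the collection $\{\mathbf f^{(b')}:b'\in\{0,\dots,B\},b'\neq b\}$ arranged as an $L\times B$ matrix. Let $\tilde Q:\mathbb R^L\times\mathbb R^{L\times B}\to\mathbb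 R$ be measurable and invariant under permutations of the columns of its second argument, and set $\tilde Q_b=\tilde Q(\mathbf f^{(b)},\mathbf f^{(-b)})$ for $b=0,\dots,B$. Define $$Q=\frac{1}{B+1}\Big(1+\sum_{b=1}^B\mathbb 1_{\{\tilde Q_b\ge\tilde Q_0\}}\Big).$$ Then $\mathbb P(Q\le x)\le x$ for all $x\in[0,1]$.
   Context: The functions $f_l$ are called residual prediction functions; $\tilde Q_b$ measures how extreme the $b$-th curve is relative to the others (larger = more extreme). *)

From HB Require Import structures.
From mathcomp Require Import all_boot all_order all_algebra all_fingroup.
From mathcomp Require Import all_classical all_reals all_analysis.
Set Implicit Arguments. Unset Strict Implicit. Unset Printing Implicit Defensive.
Import Order.TTheory GRing.Theory Num.Theory.
Local Open Scope classical_set_scope.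
Local Open Scope ring_scope.

Section defs.
Context {R : realType}.

Definition norm2 n (v : 'cV[R]_n) : R := Num.sqrt (\sum_(i < n) v i 0 ^+ 2).

(* P is the orthogonal projection onto the column space of X:
   symmetric, idempotent, with column space equal to that of X
   (row space of P^T = P equals row space of X^T). *)
Definition is_orth_proj_onto n p (X : 'M[R]_(n, p)) (P : 'M[R]_n) : Prop :=
  P^T = P /\ P *m P = P /\ (P == X^T)%MS.

Definition normres n (P : 'M[R]_n) (v : 'cV[R]_n) : 'cV[R]_n :=
  let r := (1%:M - P) *m v in (norm2 r)^-1 *: r.

(* coordinates, to use the measurable structure of tuples *)
Definition tuple_of_cV n (v : 'cV[R]_n) : n.-tuple R := [tuple v i 0 | i < n].
Definition tuple_of_mx n m (M : 'M[R]_(n, m)) : n.-tuple (m.-tuple R) :=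
  [tuple [tuple M i j | j < m] | i < n].
Definition tuple_of_fun L (g : 'I_L -> R) : L.-tuple R := [tuple g l | l < L].

(* the i.i.d. standard Gaussian family: each coordinate is measurable and the
   joint law is the product of N(0,1) laws (mutual independence + marginals) *)
Definition iid_std_gaussian d (T : measurableType d) (P : probability T R)
  (I : finType) (Z : I -> T -> R) : Prop :=
  (forall i, measurable_fun setT (Z i)) /\
  forall A : I -> set R, (forall i, measurable (A i)) ->
    P (\bigcap_(i in [set: I]) (Z i @^-1` A i)) =
    (\prod_(i : I) fine (normal_prob 0 1 (A i)))%:E.

(* source noise vectors: index 0 is epsilon, index lift ord0 b is zeta^(b) *)
Definition noise T n B (eps : T -> 'cV[R]_n) (zeta : 'I_B -> T -> 'cV[R]_n)
  (b : 'I_B.+1) : T -> 'cV[R]_n :=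
  if unlift ord0 b is Some b' then zeta b' else eps.

Definition col_perm_invariant L B (Qt : L.-tuple R * B.-tuple (L.-tuple R) -> R)
  : Prop :=
  forall (u : L.-tuple R) (M : B.-tuple (L.-tuple R)) (s : 'S_B),
    Qt (u, [tuple tnth M (s j) | j < B]) = Qt (u, M).

End defs.

From HB Require Import structures.
From mathcomp Require Import all_boot all_order all_algebra all_fingroup.
From mathcomp Require Import all_classical all_reals all_analysis.
From mathcomp Require Import measurable_realfun.
Import Order.TTheory GRing.Theory Num.Theory.
Local Open Scope classical_set_scope.
Local Open Scope ring_scope.
Set Implicit Arguments. Unset Strict Implicit. Unset Printing Implicit Defensive.

(* Under the null hypothesis the projected residual of [y] is that of [eps]:
   [I - P] kills [X beta] and the normalisation removes [sigma].  Hence each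
   score [Qt_b] is one fixed measurable function of the [b]-th block of an
   i.i.d. Gaussian sample.  Permuting the blocks leaves the law of the sample
   unchanged and, by the column-permutation invariance of [Qt], permutes the
   scores; so the events "the rank p-value of index [b] is at most [x]" all
   have the same probability.  That common probability times [B + 1] is the
   expected number of such indices, and deterministically at most [(B + 1) x]
   indices can have rank p-value at most [x]. *)

Section iid_exchangeable.
Context (R : realType) d (T : measurableType d) (Prob : probability T R)
  (I : finType) (Z : I -> T -> R).

Definition sample_tuple (h : I -> I) (w : T) : #|I|.-tuple R :=
  [tuple Z (h (enum_val k)) w | k < #|I|].

Lemma tnth_sample_tuple h w k : tnth (sample_tuple h w) k = Z (h (enum_val k)) w.
Proof. by rewrite /sample_tuple tnth_map tnth_ord_tuple. Qed.

Hypothesis iidZ : iid_std_gaussian Prob Z.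

Lemma measurable_sample_tuple h : measurable_fun setT (sample_tuple h).
Proof.
apply/measurable_fun_tnthP => k.
have -> : (fun t => tnth t k) \o sample_tuple h = Z (h (enum_val k)).
  by apply: funext => w; rewrite /= tnth_sample_tuple.
exact: iidZ.1.
Qed.

Definition tuple_rectangles : set (set (#|I|.-tuple R)) :=
  [set A | exists Af : 'I_#|I| -> set R, (forall k, measurable (Af k)) /\
     A = \bigcap_(k in setT) ((fun t => tnth t k) @^-1` Af k)].

Lemma tuple_rectangles_measurable : tuple_rectangles `<=` measurable.
Proof.
move=> _ [Af [mA ->]]; apply: fin_bigcap_measurable; first exact: finite_finset.
by move=> k _; rewrite -[X in measurable X]setTI; exact: measurable_tnth.
Qed.

Lemma tuple_rectangles_setI : setI_closed tuple_rectangles.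
Proof.
move=> _ _ [Af [mA ->]] [Bf [mB ->]]; exists (fun k => Af k `&` Bf k); split.
  by move=> k; apply: measurableI.
apply/seteqP; split => t /=.
  by move=> [h1 h2] k _; split; [apply: h1|apply: h2].
by move=> h; split => k _; have [] := h k Logic.I.
Qed.

Lemma measurable_sub_tuple_rectangles (A : set (#|I|.-tuple R)) :
  measurable A -> <<s tuple_rectangles >> A.
Proof.
apply: smallest_sub; first exact: smallest_sigma_algebra.
move=> X; rewrite -bigcup_seq => -[i _ [Y mY <-]].
apply: sub_sigma_algebra; exists (fun k => if k == i then Y else setT); split.
  by move=> k; case: eqP.
apply/seteqP; split => t /=.
  by move=> [_ hY] k _; case: eqP => // ->.
by move=> h; split => //; have := h i Logic.I; rewrite eqxx.
Qed.

Lemma preimage_sample_tuple_rectangle (s : {perm I}) Af :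
  sample_tuple s @^-1` (\bigcap_(k in setT) ((fun t => tnth t k) @^-1` Af k)) =
  \bigcap_(i in [set: I]) (Z i @^-1` Af (enum_rank (s^-1 i)%g)).
Proof.
apply/seteqP; split => w /= h.
  move=> i _; have := h (enum_rank (s^-1 i)%g) Logic.I.
  by rewrite /= tnth_sample_tuple enum_rankK permKV.
move=> k _; rewrite /= tnth_sample_tuple.
by have := h (s (enum_val k)) Logic.I; rewrite /= permK enum_valK.
Qed.

(* Both laws are products of N(0,1) laws on rectangles, which form a
   pi-system generating the product sigma-algebra. *)
Lemma sample_tuple_perm (s : {perm I}) (A : set (#|I|.-tuple R)) :
  measurable A -> Prob (sample_tuple s @^-1` A) = Prob (sample_tuple id @^-1` A).
Proof.
move=> mA; pose law h :=
  measure_function_pushforward__canonical__measure_function_Measure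
    Prob (measurable_sample_tuple h).
have -> : sample_tuple id = sample_tuple (1%g : {perm I}).
  by apply: funext => w; apply: eq_mktuple => k; rewrite perm1.
apply: (@g_sigma_algebra_measure_unique _ _ _ tuple_rectangles
  tuple_rectangles_measurable (fun _ => setT) _ _ (law s) (law (1%g : {perm I}))).
- by move=> _; exists (fun _ => setT); split => //; apply/seteqP; split.
- by rewrite bigcup_const.
- exact: tuple_rectangles_setI.
- move=> _ [Af [mAf ->]]; rewrite /law /= /pushforward.
  rewrite !preimage_sample_tuple_rectangle !iidZ.2 => [|i|i]; last 2 first.
  + exact: mAf.
  + exact: mAf.
  congr (_%:E); rewrite [LHS](reindex_inj (@perm_inj _ s)) /=.
  by apply: eq_bigr => i _; rewrite invg1 perm1 permK.
- by move=> _; rewrite /law /= /pushforward preimage_setT probability_setT ltry.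
- exact: measurable_sub_tuple_rectangles.
Qed.

End iid_exchangeable.

Section rank_pvalue.
Context (R : realType) (N : nat).
Implicit Types (q : 'I_N.+1 -> R) (b : 'I_N.+1).

Definition rank_count q b : R := \sum_(b' < N.+1) (if q b <= q b' then 1 else 0).

Definition rank_pvalue q b : R := rank_count q b / N.+1%:R.

Lemma sum_indicator_card (A : pred 'I_N.+1) :
  \sum_(b < N.+1) (if A b then 1 else 0) = #|A|%:R :> R.
Proof. by rewrite -big_mkcond /= sumr_const. Qed.

Lemma rank_pvalue_perm (pi : {perm 'I_N.+1}) q b :
  rank_pvalue (q \o pi) b = rank_pvalue q (pi b).
Proof.
rewrite /rank_pvalue /rank_count; congr (_ / _).
by rewrite [RHS](reindex_inj (@perm_inj _ pi)).
Qed.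

(* The smallest score among the selected indices is exceeded by all of them,
   so its rank count bounds their number. *)
Lemma card_rank_pvalue_le q x : 0 <= x ->
  #|[pred b | rank_pvalue q b <= x]|%:R <= N.+1%:R * x.
Proof.
move=> x0; set S := [pred b | rank_pvalue q b <= x].
have [b0 Sb0|S0] := pickP S; last by rewrite (eq_card0 S0) mulr_ge0.
have [b1 Sb1 minb1] := arg_minP q Sb0.
apply: (@le_trans _ _ (rank_count q b1)); last first.
  by move: Sb1; rewrite /S /= ler_pdivrMr ?ltr0n // mulrC.
rewrite /rank_count sum_indicator_card ler_nat; apply: subset_leq_card.
by apply/fintype.subsetP => b Sb; rewrite unfold_in /=; apply: minb1.
Qed.

Context d (T : measurableType d) (Prob : probability T R).

(* Summing the equal probabilities over b gives the expected number of
   indices with p-value at most x, which is at most (N + 1) x pointwise. *)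
Lemma rank_pvalue_superuniform (q : T -> 'I_N.+1 -> R) x : 0 <= x ->
  (forall b, measurable [set w | rank_pvalue (q w) b <= x]) ->
  (forall b, Prob [set w | rank_pvalue (q w) b <= x] =
             Prob [set w | rank_pvalue (q w) ord0 <= x]) ->
  (Prob [set w | (rank_pvalue (q w) ord0 <= x)%R] <= x%:E)%E.
Proof.
move=> x0 mE eqE; set E := fun b => [set w | rank_pvalue (q w) b <= x].
have sumE : (Prob (E ord0) *+ N.+1 =
    \int[Prob]_w (\sum_(b < N.+1) (\1_(E b) w)%:E))%E.
  rewrite ge0_integral_sum //; last first.
    by move=> b; apply/measurable_EFinP; exact: measurable_indic (mE b).
  rewrite (eq_bigr (fun=> Prob (E ord0))) => [|b _].
    by rewrite sumr_const card_ord.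
  by rewrite integral_indic ?setIT //; [exact: eqE|exact: mE].
have : (Prob (E ord0) *+ N.+1 <= (N.+1%:R * x)%:E)%E.
  rewrite sumE -[X in (_ <= X)%E]mule1 -(probability_setT Prob).
  rewrite -integral_cst //; apply: ge0_le_integral => //.
  - by move=> w _; apply: sume_ge0 => b _; rewrite lee_fin indicE ler0n.
  - apply: emeasurable_sum => b.
    by apply/measurable_EFinP; exact: measurable_indic (mE b).
  move=> w _; rewrite sumEFin lee_fin.
  apply: le_trans (card_rank_pvalue_le (q w) x0).
  rewrite -sum_indicator_card; apply: ler_sum => b _; rewrite indicE /=.
  by case: ifPn => h; [rewrite mem_set | rewrite memNset //; apply/negP].
by rewrite -mule_natl EFinM lee_pmul2l // lte_fin ltr0n.
Qed.

End rank_pvalue.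

Section leave_one_out_score.
Context (R : realType) (L B : nat) (Qt : L.-tuple R * B.-tuple (L.-tuple R) -> R).

Definition loo_score (F : 'I_B.+1 -> L.-tuple R) (b : 'I_B.+1) : R :=
  Qt (F b, [tuple F (lift b j) | j < B]).

Hypothesis Qt_inv : col_perm_invariant Qt.

(* The columns of [F \o pi] other than [b] are those of [F] other than [pi b],
   listed in the order given by the permutation [s] of ['I_B]. *)
Lemma loo_score_perm (pi : {perm 'I_B.+1}) F b :
  loo_score (F \o pi) b = loo_score F (pi b).
Proof.
pose s j := odflt j (unlift (pi b) (pi (lift b j))).
have lift_s j : lift (pi b) (s j) = pi (lift b j).
  rewrite /s; case: unliftP => [j' ->|] //= /perm_inj E.
  by move: (neq_lift b j); rewrite E eqxx.
have s_inj : injective s.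
  move=> j1 j2 /(congr1 (lift (pi b))); rewrite !lift_s.
  by move/perm_inj/lift_inj.
rewrite /loo_score -[RHS](Qt_inv _ _ (perm s_inj)); congr (Qt (_, _)).
by apply: eq_from_tnth => j; rewrite !tnth_mktuple permE lift_s.
Qed.

End leave_one_out_score.

Lemma measurable_inv (R : realType) : measurable_fun setT (@GRing.inv R).
Proof.
rewrite -(setvU [set 0]); apply/measurable_funU => //.
- exact: measurableC.
split; last exact: measurable_fun_set1.
apply: open_continuous_measurable_fun.
  exact/closed_openC/accessible_closed_set1/hausdorff_accessible/Rhausdorff.
by move=> x; rewrite inE /= => /eqP x0; apply: inv_continuous.
Qed.

Lemma measurable_normres (R : realType) d (U : measurableType d) n
    (P : 'M[R]_n) (g : U -> 'cV[R]_n) :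
  (forall i, measurable_fun setT (fun u => g u i 0)) ->
  forall i, measurable_fun setT (fun u => normres P (g u) i 0).
Proof.
move=> mg; have mr i : measurable_fun setT (fun u => ((1%:M - P) *m g u) i 0).
  under eq_fun do rewrite mxE.
  by apply: measurable_sum => j; apply: measurable_funM => //; exact: mg.
move=> i; rewrite /normres; under eq_fun do rewrite mxE.
apply: measurable_funM => //; apply: (measurableT_comp (@measurable_inv R)).
apply: (measurableT_comp (continuous_measurable_fun (@sqrt_continuous R))).
by apply: measurable_sum => j; apply: measurable_funX; exact: mr.
Qed.

Lemma norm2Z (R : realType) n (a : R) (v : 'cV[R]_n) :
  0 <= a -> norm2 (a *: v) = a * norm2 v.
Proof.
move=> a0; rewrite /norm2 -[a in RHS]ger0_norm // -sqrtr_sqr -sqrtrM ?sqr_ge0 //.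
by rewrite mulr_sumr; congr Num.sqrt; apply: eq_bigr => i _; rewrite mxE exprMn.
Qed.

Lemma normres_shift_scale (R : realType) n p (X : 'M[R]_(n, p)) (P : 'M[R]_n)
    (beta : 'cV[R]_p) (sigma : R) (e : 'cV[R]_n) :
  is_orth_proj_onto X P -> 0 < sigma ->
  normres P (X *m beta + sigma *: e) = normres P e.
Proof.
move=> [PT [PP /andP[_ /submxP [D XD]]]] sigma0.
have -> : X = P *m D^T by rewrite -[X]trmxK XD trmx_mul PT.
rewrite /normres mulmxDr !mulmxA mulmxBl mul1mx PP subrr !mul0mx add0r.
rewrite -scalemxAr norm2Z ?ltW // scalerA invfM mulrAC mulVf ?mul1r //.
exact: lt0r_neq0.
Qed.

Section residual_scores.
Context (R : realType) (n pall L B : nat) (P : 'M[R]_n) (Xall : 'M[R]_(n, pall))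
  (f : 'I_L -> n.-tuple R * n.-tuple (pall.-tuple R) -> R)
  (Qt : L.-tuple R * B.-tuple (L.-tuple R) -> R).

(* A sample lists the noise coordinates [(b, i)] in [enum] order; its [b]-th
   block is the [b]-th noise vector ([eps] for [b = 0]). *)
Local Notation sample := (#|{: 'I_B.+1 * 'I_n}|.-tuple R).

Definition sample_col (t : sample) (b : 'I_B.+1) : 'cV[R]_n :=
  \col_i tnth t (enum_rank (b, i)).

Definition features (t : sample) (b : 'I_B.+1) : L.-tuple R :=
  tuple_of_fun (fun l =>
    f l (tuple_of_cV (normres P (sample_col t b)), tuple_of_mx Xall)).

Definition scores (t : sample) : 'I_B.+1 -> R := loo_score Qt (features t).

Lemma relabel_inj (pi : {perm 'I_B.+1}) :
  injective (fun bi : 'I_B.+1 * 'I_n => (pi bi.1, bi.2)).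
Proof. by move=> [b1 i1] [b2 i2] [/perm_inj -> ->]. Qed.

Definition relabel (pi : {perm 'I_B.+1}) : {perm 'I_B.+1 * 'I_n} :=
  perm (@relabel_inj pi).

Hypothesis Qt_inv : col_perm_invariant Qt.

Section sampled.
Context d (T : measurableType d) (Z : 'I_B.+1 * 'I_n -> T -> R).

Lemma sample_col_id w b : sample_col (sample_tuple Z id w) b = \col_i Z (b, i) w.
Proof. by apply/matrixP => i j; rewrite !mxE tnth_sample_tuple enum_rankK. Qed.

Lemma features_relabel pi w :
  features (sample_tuple Z (relabel pi) w) = features (sample_tuple Z id w) \o pi.
Proof.
apply: funext => b; congr tuple_of_fun; apply: funext => l /=.
congr (f l (tuple_of_cV (normres P _), _)); apply/matrixP => i j.
by rewrite sample_col_id !mxE tnth_sample_tuple enum_rankK permE.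
Qed.

Lemma scores_relabel pi w :
  scores (sample_tuple Z (relabel pi) w) = scores (sample_tuple Z id w) \o pi.
Proof. by apply: funext => b; rewrite /scores features_relabel loo_score_perm. Qed.

End sampled.

Hypothesis mf : forall l, measurable_fun setT (f l).
Hypothesis mQt : measurable_fun setT Qt.

Lemma measurable_features b : measurable_fun setT (features^~ b).
Proof.
apply/measurable_fun_tnthP => l; rewrite /comp /=.
under eq_fun do rewrite /features /tuple_of_fun tnth_map tnth_ord_tuple.
apply: (measurableT_comp (mf l)); apply: measurable_fun_pair => //.
apply/measurable_fun_tnthP => i; rewrite /comp /=.
under eq_fun do rewrite /tuple_of_cV tnth_map tnth_ord_tuple.
apply: measurable_normres => j; under eq_fun do rewrite mxE.
exact: measurable_tnth.
Qed.

Lemma measurable_scores b : measurable_fun setT (scores^~ b).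
Proof.
apply: (measurableT_comp mQt); apply: measurable_fun_pair.
  exact: measurable_features.
apply/measurable_fun_tnthP => j; rewrite /comp /=.
under eq_fun do rewrite tnth_map tnth_ord_tuple.
exact: measurable_features.
Qed.

Lemma measurable_rank_pvalue_scores b x :
  measurable [set t | rank_pvalue (scores t) b <= x].
Proof.
rewrite -[X in measurable X]setTI; apply: measurable_fun_ler => //.
rewrite /rank_pvalue /rank_count; apply: measurable_funM => //.
apply: measurable_sum => b'; apply: measurable_fun_ifT => //.
by apply: measurable_fun_ler; exact: measurable_scores.
Qed.

Context d (T : measurableType d) (Prob : probability T R)
  (Z : 'I_B.+1 * 'I_n -> T -> R).
Hypothesis iidZ : iid_std_gaussian Prob Z.

Lemma rank_pvalue_scores_exchangeable b x :
  Prob [set w | rank_pvalue (scores (sample_tuple Z id w)) b <= x] =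
  Prob [set w | rank_pvalue (scores (sample_tuple Z id w)) ord0 <= x].
Proof.
rewrite -(sample_tuple_perm iidZ (relabel (tperm ord0 b))
  (measurable_rank_pvalue_scores ord0 x)).
congr (Prob _); apply/seteqP; split => w /=;
  by rewrite scores_relabel rank_pvalue_perm tpermL.
Qed.

End residual_scores.

Theorem proposition1 (R : realType) (d : measure_display) (T : measurableType d)
  (Prob : probability T R)
  (n p pall L B : nat) (X : 'M[R]_(n, p)) (P : 'M[R]_n) (Xall : 'M[R]_(n, pall))
  (beta : 'cV[R]_p) (sigma : R)
  (eps : T -> 'cV[R]_n) (zeta : 'I_B -> T -> 'cV[R]_n)
  (f : 'I_L -> n.-tuple R * n.-tuple (pall.-tuple R) -> R)
  (Qt : L.-tuple R * B.-tuple (L.-tuple R) -> R) :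
  (p < n)%N ->
  is_orth_proj_onto X P ->
  0 < sigma ->
  iid_std_gaussian Prob
    (fun bi : 'I_B.+1 * 'I_n => fun w => noise eps zeta bi.1 w bi.2 ord0) ->
  (forall l, measurable_fun setT (f l)) ->
  measurable_fun setT Qt ->
  col_perm_invariant Qt ->
  let y := fun w => X *m beta + sigma *: eps w in
  let Rhat := fun (b : 'I_B.+1) w =>
    if unlift ord0 b is Some b' then normres P (zeta b' w) else normres P (y w) in
  let fb := fun (b : 'I_B.+1) w (l : 'I_L) =>
    f l (tuple_of_cV (Rhat b w), tuple_of_mx Xall) in
  let fminus := fun (b : 'I_B.+1) w =>
    [tuple tuple_of_fun (fb (lift b j) w) | j < B] in
  let Qtb := fun (b : 'I_B.+1) w => Qt (tuple_of_fun (fb b w), fminus b w) in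
  let Q := fun w =>
    (1 + \sum_(b < B) (if Qtb ord0 w <= Qtb (lift ord0 b) w then 1 else 0)) / B.+1%:R : R in
  forall x : R, 0 <= x <= 1 -> (Prob [set w | (Q w <= x)%R] <= x%:E)%E.
Proof.
(* [p < n] only makes the residuals nonzero almost surely; the bound holds
   regardless, since [normres] maps a zero residual to zero. *)
move=> _ projP sigma0 iidZ mf mQt Qt_inv y Rhat fb fminus Qtb Q x /andP[x0 _].
set Z := fun bi w => _ in iidZ; pose W := sample_tuple Z id.
have Rhat_noise b w : Rhat b w = normres P (noise eps zeta b w).
  by rewrite /Rhat /noise; case: (unlift ord0 b) => //; rewrite /y normres_shift_scale.
have fb_features b w : tuple_of_fun (fb b w) = features P Xall f (W w) b.
  rewrite /fb /features sample_col_id Rhat_noise; congr (tuple_of_fun _).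
  apply: funext => l; congr (f l (tuple_of_cV (normres P _), _)).
  by apply/matrixP => i j; rewrite mxE (ord1 j).
have Qtb_scores b w : Qtb b w = scores P Xall f Qt (W w) b.
  rewrite /Qtb /scores /loo_score /fminus fb_features; congr (Qt (_, _)).
  by apply: eq_mktuple => j; rewrite fb_features.
have Q_pvalue w : Q w = rank_pvalue (scores P Xall f Qt (W w)) ord0.
  rewrite /Q /rank_pvalue /rank_count big_ord_recl lexx; congr ((_ + _) / _).
  by apply: eq_bigr => b _; rewrite !Qtb_scores.
under eq_set do rewrite Q_pvalue.
apply: (rank_pvalue_superuniform (q := scores P Xall f Qt \o W) x0) => b.
  rewrite -[X in measurable X]setTI.
  exact (measurable_sample_tuple iidZ id measurableT
    (measurable_rank_pvalue_scores P Xall mf mQt b x)).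
exact (rank_pvalue_scores_exchangeable P Xall Qt_inv mf mQt iidZ b x).
Qed.
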